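(* If $(\alpha,\beta)$ is admissible and non-null, then there exists $x\in(0,1)$ such that $\pi_x(\alpha)=\pi_x(\beta)$.
   Context: $\Omega=\{0,1\}^\infty$ (infinite binary strings $\omega_0\omega_1\cdots$), $S$ the left shift, $\preceq$ the lexicographic order with intervals $[\alpha,\beta]=\{\omega:\alpha\preceq\omega\preceq\beta\}$ and half-open analogues. $(\alpha,\beta)$ is admissible if $\alpha_0=0,\alpha_1=1,\beta_0=1,\beta_1=0$ and $S^n\alpha\notin(\alpha,\beta]$, $S^n\beta\notin[\alpha,\beta)$ for all $n\ge0$. $\Omega_{(\alpha,\beta,-)}=\{\omega:S^n\omega\notin(\alpha,\beta]\ \forall n\ge0\}$, $\Omega_{(\alpha,\beta,+)}=\{\omega:S^n\omega\notin[\alpha,\beta)\ \forall n\ge0\}$, $\Omega_{(\alpha,\beta)}$ their union. With $\Gamma_n=\{\omega_0\cdots\omega_n:\omega\in\Gamma\}$ and $h(\Gamma)=\limsup_n\frac1n\ln|\Gamma_n|$, the admissible pair is non-null if $h(\Omega_{(\alpha,\beta)})>0$. Projection: $\pi_x(\omega)=(1-x)\sum_{k\ge0}\omega_kx^k$ for $x\in[0,1)$. *)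

From Stdlib Require Import Reals Lra Lia List Arith ClassicalDescription.
From Coquelicot Require Import Coquelicot.
Import ListNotations.
Open Scope R_scope.

(* Omega = {0,1}^infinity : infinite binary strings, 0 = false, 1 = true. *)
Definition Omega := nat -> bool.

Definition shift (w : Omega) : Omega := fun k => w (S k).
Definition shiftn (n : nat) (w : Omega) : Omega := fun k => w (n + k)%nat.

Definition lex_lt (a b : Omega) : Prop :=
  exists n : nat, (forall k, (k < n)%nat -> a k = b k) /\ a n = false /\ b n = true.
Definition lex_le (a b : Omega) : Prop := lex_lt a b \/ (forall k, a k = b k).

Definition in_oc (a b w : Omega) : Prop := lex_lt a w /\ lex_le w b.
Definition in_co (a b w : Omega) : Prop := lex_le a w /\ lex_lt w b.

Definition admissible (alpha beta : Omega) : Prop :=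
  alpha 0%nat = false /\ alpha 1%nat = true /\
  beta 0%nat = true /\ beta 1%nat = false /\
  (forall n, ~ in_oc alpha beta (shiftn n alpha)) /\
  (forall n, ~ in_co alpha beta (shiftn n beta)).

Definition Omega_minus (alpha beta : Omega) (w : Omega) : Prop :=
  forall n, ~ in_oc alpha beta (shiftn n w).
Definition Omega_plus (alpha beta : Omega) (w : Omega) : Prop :=
  forall n, ~ in_co alpha beta (shiftn n w).
Definition Omega_ab (alpha beta : Omega) (w : Omega) : Prop :=
  Omega_minus alpha beta w \/ Omega_plus alpha beta w.

Fixpoint all_words (n : nat) : list (list bool) :=
  match n with
  | O => [[]]
  | S m => map (cons false) (all_words m) ++ map (cons true) (all_words m)
  end.

(* The word w_0 w_1 ... w_n (length n+1). *)
Definition prefix (w : Omega) (n : nat) : list bool := map w (seq 0 (S n)).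

Definition card_prefixes (G : Omega -> Prop) (n : nat) : nat :=
  length (filter (fun l => if excluded_middle_informative
                                (exists w, G w /\ prefix w n = l)
                           then true else false)
                 (all_words (S n))).

Definition entropy (G : Omega -> Prop) : Rbar :=
  LimSup_seq (fun n => ln (INR (card_prefixes G n)) / INR n).

Definition non_null (alpha beta : Omega) : Prop :=
  Rbar_lt (Finite 0) (entropy (Omega_ab alpha beta)).

Definition proj (x : R) (w : Omega) : R :=
  (1 - x) * Series (fun k => if w k then x ^ k else 0).

From Stdlib Require Import Reals.
From Coquelicot Require Import Coquelicot.
From Stdlib Require Import Lra Lia List Arith Classical ClassicalDescription FunctionalExtensionality.
Import ListNotations.
Open Scope R_scope.

(* Let D(x) = pi_x(beta) - pi_x(alpha). Since D(0) = 1, if D had no zero in (0,1) it would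
   be positive there. The words of length n that extend to a point of Omega_minus are
   recognised by an automaton whose live states are lexicographic windows (L, R] with R a
   shift of alpha (or 1^oo) and L a shift of beta (or absent). If S_n(x) is the sum of
   pi_x(R) - pi_x(L) over the N_n such words, then
     x^n S_n(x) = 1 - D(x) sum_{m<n} (N_{m+1} - N_m) x^m,   with S_n(x) >= -N_n.
   N_n is submultiplicative; let rho be the radius of convergence of sum N_n x^n. Positive
   entropy makes N_n (or its analogue for Omega_plus, which becomes Omega_minus after
   complementing all bits) grow exponentially, so rho < 1. Just below rho the identity
   bounds sum (N_{m+1} - N_m) x^m by 2 / D(x), hence (1 - x) sum N_m x^m stays bounded by
   Abel summation; but N_m rho^m >= 1, so that sum blows up as x -> rho, a contradiction
   with D(rho) > 0. *)

Definition ocons (c : bool) (v : Omega) : Omega :=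
  fun k => match k with O => c | S k' => v k' end.
Definition ones : Omega := fun _ => true.
Definition flip (w : Omega) : Omega := fun k => negb (w k).

Lemma shift_shiftn w k : shift (shiftn k w) = shiftn (S k) w.
Proof. apply functional_extensionality; intro j; unfold shift, shiftn; f_equal; lia. Qed.

Lemma shift_ocons c v : shift (ocons c v) = v.
Proof. reflexivity. Qed.

Lemma ocons_shift (v : Omega) : v = ocons (v 0%nat) (shift v).
Proof. apply functional_extensionality; intros [|k]; reflexivity. Qed.

Lemma flip_flip w : flip (flip w) = w.
Proof. apply functional_extensionality; intro k; unfold flip; destruct (w k); auto. Qed.

(** * Lexicographic order *)

Lemma lex_lt_head (x y : Omega) :
  lex_lt x y <-> (x 0%nat = false /\ y 0%nat = true) \/
                 (x 0%nat = y 0%nat /\ lex_lt (shift x) (shift y)).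
Proof.
  split.
  - intros [[|n] [H1 [H2 H3]]]; [left; auto|right; split].
    + apply H1; lia.
    + exists n; split; [intros k Hk; apply H1; lia|auto].
  - intros [[H1 H2]|[H1 [n [H2 [H3 H4]]]]].
    + exists 0%nat; split; [intros; lia|auto].
    + exists (S n); split; [|auto]. intros [|k] Hk; auto. apply H2; lia.
Qed.

Lemma lex_le_head (x y : Omega) :
  lex_le x y <-> (x 0%nat = false /\ y 0%nat = true) \/
                 (x 0%nat = y 0%nat /\ lex_le (shift x) (shift y)).
Proof.
  unfold lex_le. rewrite lex_lt_head. split.
  - intros [[H|[H1 H2]]|H]; auto.
    right; split; [apply H|right; intro k; apply H].
  - intros [H|[H1 [H2|H2]]]; auto.
    right; intros [|k]; auto. apply H2.
Qed.

Lemma lex_total (a b : Omega) : lex_lt a b \/ (forall k, a k = b k) \/ lex_lt b a.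
Proof.
  destruct (classic (exists k, a k <> b k)) as [H|H].
  - assert (Hd : forall n, a n <> b n \/ ~ a n <> b n).
    { intro n; destruct (Bool.bool_dec (a n) (b n)); [right; tauto|left; auto]. }
    destruct (dec_inh_nat_subset_has_unique_least_element (fun n => a n <> b n) Hd H)
      as [n [[Hn Hmin] _]].
    assert (Hagree : forall k, (k < n)%nat -> a k = b k).
    { intros k Hk. destruct (Bool.bool_dec (a k) (b k)); auto.
      specialize (Hmin k n0). lia. }
    destruct (a n) eqn:E1; destruct (b n) eqn:E2; try congruence.
    + right; right. exists n; split; auto. intros k Hk; symmetry; auto.
    + left. exists n; auto.
  - right; left. intro k. destruct (Bool.bool_dec (a k) (b k)); auto.
    exfalso; apply H; eauto.
Qed.
Lemma lex_lt_le_asym (a b : Omega) : lex_lt a b -> lex_le b a -> False.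
Proof.
  intros [n [H1 [H2 H3]]] [[m [G1 [G2 G3]]]|G].
  - destruct (lt_eq_lt_dec n m) as [[Hl|He]|Hl].
    + rewrite G1 in H3 by lia. congruence.
    + subst; congruence.
    + rewrite H1 in G3 by lia. congruence.
  - rewrite G in H3; congruence.
Qed.

Lemma lex_lt_trans (a b c : Omega) : lex_lt a b -> lex_lt b c -> lex_lt a c.
Proof.
  intros [n [H1 [H2 H3]]] [m [G1 [G2 G3]]].
  destruct (lt_eq_lt_dec n m) as [[Hl|He]|Hl].
  - exists n; split; [intros k Hk; rewrite H1, G1 by lia; auto|].
    split; auto. rewrite <- G1 by lia; auto.
  - subst; exists m; split; [intros k Hk; rewrite H1, G1 by lia; auto|auto].
  - exists m; split; [intros k Hk; rewrite H1, G1 by lia; auto|].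
    split; auto. rewrite H1 by lia; auto.
Qed.

Lemma lex_le_cases (a b : Omega) : lex_le a b -> lex_lt a b \/ a = b.
Proof. intros [H|H]; [left|right]; auto. now apply functional_extensionality. Qed.

Lemma lex_le_lt_trans (a b c : Omega) : lex_le a b -> lex_lt b c -> lex_lt a c.
Proof. intros H G; destruct (lex_le_cases _ _ H) as [H'|<-]; eauto using lex_lt_trans. Qed.

Lemma lex_lt_le_trans (a b c : Omega) : lex_lt a b -> lex_le b c -> lex_lt a c.
Proof. intros H G; destruct (lex_le_cases _ _ G) as [G'|<-]; eauto using lex_lt_trans. Qed.

Lemma lex_le_trans (a b c : Omega) : lex_le a b -> lex_le b c -> lex_le a c.
Proof.
  intros H G; destruct (lex_le_cases _ _ H) as [H'|<-]; auto.
  left; eauto using lex_lt_le_trans.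
Qed.

Lemma lex_le_refl a : lex_le a a.
Proof. right; auto. Qed.

Lemma lex_not_lt_le a b : ~ lex_lt a b -> lex_le b a.
Proof.
  intro H. destruct (lex_total a b) as [G|[G|G]]; [tauto| |left; auto].
  right; intro; symmetry; auto.
Qed.

Lemma lex_not_le_lt a b : ~ lex_le a b -> lex_lt b a.
Proof.
  intro H. destruct (lex_total a b) as [G|[G|G]]; auto; exfalso; apply H.
  - left; auto.
  - right; auto.
Qed.

Lemma lex_le_ones v : lex_le v ones.
Proof.
  destruct (lex_total v ones) as [H|[H|[n [_ [H _]]]]]; [left|right|]; auto. discriminate.
Qed.

Lemma lex_lt_flip a b : lex_lt (flip a) (flip b) <-> lex_lt b a.
Proof.
  unfold flip; split; intros [n [H1 [H2 H3]]]; exists n; repeat split.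
  - intros k Hk; specialize (H1 k Hk). destruct (a k), (b k); simpl in *; congruence.
  - destruct (b n); simpl in *; congruence.
  - destruct (a n); simpl in *; congruence.
  - intros k Hk; rewrite H1; auto.
  - rewrite H3; auto.
  - rewrite H2; auto.
Qed.

Lemma lex_le_flip a b : lex_le (flip a) (flip b) <-> lex_le b a.
Proof.
  unfold lex_le; rewrite lex_lt_flip. unfold flip. split; intros [H|H]; auto; right.
  - intro k; specialize (H k); destruct (a k), (b k); simpl in *; congruence.
  - intro k; rewrite H; auto.
Qed.

Lemma lex_lt_of_heads v w : v 0%nat = false -> w 0%nat = true -> lex_lt v w.
Proof. intros. apply lex_lt_head; auto. Qed.

Lemma lex_le_head_false v w : lex_le v w -> w 0%nat = false -> v 0%nat = false.
Proof.
  rewrite lex_le_head. destruct (v 0%nat); intuition congruence.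
Qed.

Lemma lex_lt_head_true v w : lex_lt v w -> v 0%nat = true -> w 0%nat = true.
Proof.
  rewrite lex_lt_head. destruct (w 0%nat); intuition congruence.
Qed.

(** * An automaton recognising the prefixes of [Omega_minus] *)

Lemma Omega_minus_ocons a b c v : Omega_minus a b (ocons c v) <->
  ~ in_oc a b (ocons c v) /\ Omega_minus a b v.
Proof.
  split.
  - intro H. split; [apply (H 0%nat)|intro n; apply (H (S n))].
  - intros [H1 H2] [|n]; [apply H1|apply H2].
Qed.

Lemma Omega_minus_shiftn a b w k : Omega_minus a b w -> Omega_minus a b (shiftn k w).
Proof.
  intros H n. replace (shiftn n (shiftn k w)) with (shiftn (k + n) w); [apply H|].
  apply functional_extensionality; intro j; unfold shiftn; f_equal; lia.
Qed.

Lemma Omega_minus_ones a b : b 0%nat = true -> b 1%nat = false -> Omega_minus a b ones.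
Proof.
  intros Hb0 Hb1 n [_ H]. change (shiftn n ones) with ones in H.
  apply lex_le_head in H. destruct H as [[H _]|[_ H]]; [discriminate|].
  apply lex_le_head in H. destruct H as [[H _]|[H _]]; [discriminate|].
  unfold shift, ones in H; simpl in H. congruence.
Qed.

Lemma not_in_oc_ocons_false a b v : a 0%nat = false -> b 0%nat = true ->
  (~ in_oc a b (ocons false v) <-> lex_le v (shift a)).
Proof.
  intros Ha Hb. rewrite <- (shift_ocons false v) at 2.
  assert (E : lex_le (ocons false v) a <-> lex_le (shift (ocons false v)) (shift a)).
  { rewrite lex_le_head. simpl. rewrite Ha. intuition discriminate. }
  rewrite <- E. unfold in_oc. split.
  - intro H. apply lex_not_lt_le. intro G. apply H; split; auto.
    left. apply lex_lt_head; auto.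
  - intros H [G _]. eapply lex_lt_le_asym; eauto.
Qed.

Lemma not_in_oc_ocons_true a b v : a 0%nat = false -> b 0%nat = true ->
  (~ in_oc a b (ocons true v) <-> lex_lt (shift b) v).
Proof.
  intros Ha Hb. rewrite <- (shift_ocons true v) at 2.
  assert (E : lex_lt b (ocons true v) <-> lex_lt (shift b) (shift (ocons true v))).
  { rewrite lex_lt_head. simpl. rewrite Hb. intuition discriminate. }
  rewrite <- E. unfold in_oc. split.
  - intro H. apply lex_not_le_lt. intro G. apply H; split; auto.
    apply lex_lt_head; auto.
  - intros H [_ G]. eapply lex_lt_le_asym; eauto.
Qed.

Section Admissible.

Variables alpha beta : Omega.
Hypothesis Hadm : admissible alpha beta.

Lemma admissible_alpha_shift_le k :
  shiftn k alpha 0%nat = false -> lex_le (shiftn k alpha) alpha.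
Proof.
  destruct Hadm as (Ha0&_&Hb0&_&HA&_). intro H.
  specialize (HA k). unfold in_oc in HA.
  apply lex_not_lt_le. intro G. apply HA; split; auto.
  left. apply lex_lt_head; auto.
Qed.

Lemma admissible_beta_shift_ge k :
  shiftn k beta 0%nat = true -> lex_le beta (shiftn k beta).
Proof.
  destruct Hadm as (Ha0&_&Hb0&_&_&HB). intro H.
  specialize (HB k). unfold in_co in HB.
  apply lex_not_lt_le. intro G. apply HB; split; auto.
  left; apply lex_lt_head; auto.
Qed.

Lemma admissible_beta_shift_lt k :
  shiftn k beta 0%nat = false -> lex_lt (shiftn k beta) alpha.
Proof.
  destruct Hadm as (Ha0&_&Hb0&_&_&HB). intro H.
  specialize (HB k). unfold in_co in HB.
  apply lex_not_le_lt. intro G. apply HB; split; auto. apply lex_lt_head; auto.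
Qed.

End Admissible.

Section Automaton.

Variables alpha beta : Omega.

Definition lower_head (L : option Omega) : bool :=
  match L with Some l => l 0%nat | None => false end.
Definition above_lower (L : option Omega) (v : Omega) : Prop :=
  match L with Some l => lex_lt l v | None => True end.

Definition state := option (Omega * option Omega).

(* A live state [Some (R, L)] after reading a word [u] records the window [L < v <= R]
   that the continuation [v] must lie in for [u v] to stay in [Omega_minus]
   ([L = None]: no lower bound); [None] is the dead state. *)
Definition accepts (s : state) (v : Omega) : Prop :=
  match s with Some (R, L) => above_lower L v /\ lex_le v R | None => False end.

Definition step (s : state) (c : bool) : state :=
  match s with
  | None => None
  | Some (R, L) =>
    if c then
      if R 0%nat then Some (shift R, if lower_head L then option_map shift L
                                     else Some (shift beta))
      else None
    else
      if lower_head L then None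
      else Some (if R 0%nat then shift alpha else shift R, option_map shift L)
  end.

Definition run (u : list bool) : state := fold_left step u (Some (ones, None)).

Definition reachable (s : state) : Prop :=
  match s with
  | Some (R, L) => (R = ones \/ exists k, R = shiftn k alpha) /\
                   (L = None \/ exists k, L = Some (shiftn k beta))
  | None => True
  end.

Lemma run_snoc u c : run (u ++ [c]) = step (run u) c.
Proof. unfold run. rewrite fold_left_app. reflexivity. Qed.

Lemma reachable_step s c : reachable s -> reachable (step s c).
Proof.
  destruct s as [[R L]|]; [|auto]. intros [HR HL]. simpl.
  assert (HR' : shift R = ones \/ exists k, shift R = shiftn k alpha).
  { destruct HR as [->|[k ->]]; [left; reflexivity|right; exists (S k); apply shift_shiftn]. }
  assert (HL' : option_map shift L = None \/
                exists k, option_map shift L = Some (shiftn k beta)).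
  { destruct HL as [->|[k ->]]; [left; reflexivity|].
    right; exists (S k); simpl; f_equal; apply shift_shiftn. }
  destruct c, (R 0%nat), (lower_head L); simpl; auto;
    split; auto; right; exists 1%nat; reflexivity.
Qed.

Lemma reachable_run u : reachable (run u).
Proof.
  induction u as [|c u IH] using rev_ind.
  - split; left; reflexivity.
  - rewrite run_snoc. apply reachable_step, IH.
Qed.

(* Admissibility makes one of the two constraints on [v] redundant in each branch:
   shifts of [beta] starting with 1 are [>= beta], shifts of [alpha] starting with 0 are
   [<= alpha]. *)
Lemma accepts_ocons s c v : reachable s ->
  admissible alpha beta ->
  (~ in_oc alpha beta (ocons c v) /\ accepts s (ocons c v)) <-> accepts (step s c) v.
Proof.
  intros Hs Hadm. pose proof Hadm as (Ha0&_&Hb0&_).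
  destruct s as [[R L]|]; [|simpl; tauto]. destruct Hs as [HR HL].
  assert (Hlow : forall l c', lex_lt l (ocons c' v) <->
            (l 0%nat = false /\ c' = true) \/ (l 0%nat = c' /\ lex_lt (shift l) v)).
  { intros l c'. rewrite lex_lt_head, shift_ocons. reflexivity. }
  assert (Hup : lex_le (ocons c v) R <->
            (c = false /\ R 0%nat = true) \/ (c = R 0%nat /\ lex_le v (shift R))).
  { rewrite lex_le_head, shift_ocons. reflexivity. }
  simpl accepts. rewrite Hup. destruct c.
  - rewrite not_in_oc_ocons_true by auto.
    destruct (R 0%nat) eqn:ER; [|simpl; intuition discriminate].
    destruct HL as [->|[k ->]]; simpl.
    + intuition discriminate.
    + rewrite Hlow. destruct (shiftn k beta 0%nat) eqn:Ek; simpl; [|intuition discriminate].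
      assert (Hge := admissible_beta_shift_ge _ _ Hadm k Ek).
      rewrite lex_le_head in Hge. destruct Hge as [[? ?]|[_ Hge]]; [congruence|].
      split; [intuition discriminate|].
      intros [Hl Hv]. repeat split; auto. eapply lex_le_lt_trans; eauto.
  - rewrite not_in_oc_ocons_false by auto.
    assert (Hmin : R 0%nat = false -> lex_le (shift R) (shift alpha)).
    { intro HR0. destruct HR as [->|[k ->]]; [discriminate|].
      assert (Hle := admissible_alpha_shift_le _ _ Hadm k HR0).
      rewrite lex_le_head in Hle. destruct Hle as [[? ?]|[_ Hle]]; [congruence|auto]. }
    destruct L as [l|]; simpl.
    + rewrite Hlow. destruct (l 0%nat), (R 0%nat) eqn:ER; simpl;
        intuition (try discriminate; eauto using lex_le_trans).
    + destruct (R 0%nat) eqn:ER; intuition (try discriminate; eauto using lex_le_trans).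
Qed.

End Automaton.

Fixpoint prepend (u : list bool) (v : Omega) : Omega :=
  match u with [] => v | c :: u' => ocons c (prepend u' v) end.

Lemma prepend_snoc u c v : prepend (u ++ [c]) v = prepend u (ocons c v).
Proof. induction u as [|c' u IH]; simpl; [|rewrite IH]; reflexivity. Qed.

Lemma Omega_minus_prepend a b u v : admissible a b ->
  Omega_minus a b (prepend u v) <-> Omega_minus a b v /\ accepts (run a b u) v.
Proof.
  intro Hadm. revert v. induction u as [|c u IH] using rev_ind; intro v.
  - simpl. pose proof (lex_le_ones v). tauto.
  - rewrite prepend_snoc, IH, run_snoc, Omega_minus_ocons.
    rewrite <- accepts_ocons by auto using reachable_run. tauto.
Qed.

Definition initial (w : Omega) (n : nat) : list bool := map w (seq 0 n).

Lemma map_seq_shift (w : Omega) m n :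
  map w (seq m n) = map (fun k => w (m + k)%nat) (seq 0 n).
Proof.
  revert m w; induction n; intros m w; simpl; auto. f_equal; [f_equal; lia|].
  rewrite IHn, (IHn 1%nat (fun k => w (m + k)%nat)). apply map_ext; intro; f_equal; lia.
Qed.

Lemma initial_S w n : initial w (S n) = w 0%nat :: initial (shift w) n.
Proof. unfold initial. simpl. f_equal. apply map_seq_shift. Qed.

Lemma initial_app w m n : initial w (m + n) = initial w m ++ initial (shiftn m w) n.
Proof. unfold initial. rewrite seq_app, map_app, (map_seq_shift w m). reflexivity. Qed.

Lemma initial_length w n : length (initial w n) = n.
Proof. unfold initial. rewrite length_map, length_seq; auto. Qed.

Lemma initial_prepend u v : initial (prepend u v) (length u) = u.
Proof. induction u; simpl; auto. rewrite initial_S. simpl. f_equal. exact IHu. Qed.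

Lemma prepend_initial w u : initial w (length u) = u -> w = prepend u (shiftn (length u) w).
Proof.
  revert w; induction u as [|c u IH]; intros w H.
  - apply functional_extensionality; intro k; reflexivity.
  - simpl in H. rewrite initial_S in H. injection H as H0 H1.
    apply IH in H1. apply functional_extensionality; intros [|k]; simpl; auto.
    change (shift w k = prepend u (shiftn (length u) (shift w)) k). rewrite <- H1; auto.
Qed.

Lemma app_inj_length {A : Type} (l1 l2 m1 m2 : list A) :
  length l1 = length m1 -> l1 ++ l2 = m1 ++ m2 -> l1 = m1 /\ l2 = m2.
Proof.
  revert m1; induction l1 as [|x l1 IH]; intros [|y m1] Hl He;
    simpl in *; try discriminate; auto.
  injection He as -> He. injection Hl as Hl. destruct (IH m1 Hl He) as [-> ->]; auto.
Qed.

Definition minus_word a b (u : list bool) :=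
  exists w, Omega_minus a b w /\ initial w (length u) = u.

Section Words.

Variables alpha beta : Omega.
Hypothesis Hadm : admissible alpha beta.

Lemma minus_word_iff u :
  minus_word alpha beta u <->
  exists v, Omega_minus alpha beta v /\ accepts (run alpha beta u) v.
Proof.
  split.
  - intros [w [H1 H2]]. exists (shiftn (length u) w). apply Omega_minus_prepend; auto.
    rewrite <- prepend_initial; auto.
  - intros [v H]. exists (prepend u v). split.
    + apply Omega_minus_prepend; auto.
    + apply initial_prepend.
Qed.

Lemma minus_word_nil : minus_word alpha beta [].
Proof.
  destruct Hadm as (_&_&?&?&_). exists ones. split; auto using Omega_minus_ones.
Qed.

Lemma minus_word_app u v : minus_word alpha beta (u ++ v) ->
  minus_word alpha beta u /\ minus_word alpha beta v.
Proof.
  intros [w [H1 H2]]. rewrite length_app, initial_app in H2.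
  apply app_inj_length in H2; [|now rewrite initial_length].
  destruct H2 as [H2 H3]. split.
  - exists w; split; auto.
  - exists (shiftn (length u) w). split; auto using Omega_minus_shiftn.
Qed.

Lemma minus_word_live u : minus_word alpha beta u ->
  exists R L, run alpha beta u = Some (R, L).
Proof.
  intros [v [_ Hv]]%minus_word_iff. destruct (run alpha beta u) as [[R L]|]; [eauto|contradiction].
Qed.

Lemma minus_word_snoc u c :
  minus_word alpha beta (u ++ [c]) <->
  exists v, Omega_minus alpha beta v /\ v 0%nat = c /\ accepts (run alpha beta u) v.
Proof.
  rewrite !minus_word_iff, run_snoc. split.
  - intros [v [H1 H2]]. exists (ocons c v).
    apply accepts_ocons in H2; auto using reachable_run.
    rewrite Omega_minus_ocons. tauto.
  - intros [v [H1 [<- H2]]]. exists (shift v).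
    rewrite (ocons_shift v), Omega_minus_ocons in H1.
    rewrite (ocons_shift v) in H2.
    split; [tauto|]. apply accepts_ocons; auto using reachable_run. tauto.
Qed.

Lemma minus_word_snoc_prefix u c : minus_word alpha beta (u ++ [c]) -> minus_word alpha beta u.
Proof.
  intros (v & H1 & _ & H2)%minus_word_snoc. apply minus_word_iff. eauto.
Qed.

Lemma reachable_upper_Omega_minus R L : reachable alpha beta (Some (R, L)) ->
  Omega_minus alpha beta R.
Proof.
  pose proof Hadm as (_&_&?&?&HA&_).
  intros [[->|[k ->]] _]; [apply Omega_minus_ones|apply Omega_minus_shiftn]; auto.
Qed.

Lemma reachable_lower_lt_alpha R l : reachable alpha beta (Some (R, Some l)) ->
  l 0%nat = false -> lex_lt l alpha.
Proof.
  intros [_ [?|[k Hk]]]; [discriminate|]. injection Hk as ->.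
  apply admissible_beta_shift_lt; auto.
Qed.

Lemma minus_word_live_cases u R L :
  minus_word alpha beta u -> run alpha beta u = Some (R, L) ->
  ~ (R 0%nat = false /\ lower_head L = true) /\
  (minus_word alpha beta (u ++ [true]) <-> R 0%nat = true) /\
  (minus_word alpha beta (u ++ [false]) <-> lower_head L = false).
Proof.
  intros Hu E. pose proof (reachable_run alpha beta u) as HI. rewrite E in HI.
  pose proof Hadm as (Ha0&_&_&_&HA&_).
  apply minus_word_iff in Hu. rewrite E in Hu. destruct Hu as [v [Hv [HLv HvR]]].
  assert (Hhead_R : R 0%nat = false -> v 0%nat = false) by eauto using lex_le_head_false.
  assert (Hhead_L : lower_head L = true -> v 0%nat = true).
  { destruct L as [l|]; simpl; [eauto using lex_lt_head_true|discriminate]. }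
  rewrite !minus_word_snoc, E. simpl accepts. split; [|split].
  - intros [X Y]. apply Hhead_R in X. apply Hhead_L in Y. congruence.
  - split.
    + intros (v' & _ & Hv'0 & _ & Hv'R). destruct (R 0%nat) eqn:ER; auto.
      rewrite (lex_le_head_false _ _ Hv'R ER) in Hv'0. discriminate.
    + intro HR. destruct (lower_head L) eqn:HL.
      * exists v. auto.
      * exists R. split; [eapply reachable_upper_Omega_minus; eauto|].
        split; [auto|split; [|apply lex_le_refl]].
        destruct L as [l|]; simpl; auto. apply lex_lt_of_heads; auto.
  - split.
    + intros (v' & _ & Hv'0 & HLv' & _).
      destruct L as [l|]; simpl in *; auto. destruct (l 0%nat) eqn:El; auto.
      rewrite (lex_lt_head_true _ _ HLv' El) in Hv'0. discriminate.
    + intro HL. destruct (R 0%nat) eqn:ER.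
      * exists alpha. split; [exact HA|]. split; [auto|split].
        -- destruct L as [l|]; simpl; auto. eapply reachable_lower_lt_alpha; eauto.
        -- left. apply lex_lt_of_heads; auto.
      * exists v. auto.
Qed.

Lemma minus_word_extendable u : minus_word alpha beta u ->
  minus_word alpha beta (u ++ [false]) \/ minus_word alpha beta (u ++ [true]).
Proof.
  intro Hu. destruct (minus_word_live u Hu) as [R [L E]].
  destruct (minus_word_live_cases u R L Hu E) as [H10 [Ht Hf]].
  rewrite Ht, Hf. destruct (R 0%nat), (lower_head L); auto.
Qed.

End Words.

(** * The projection [pi_x] *)

Definition proj_terms (x : R) (w : Omega) (k : nat) : R := if w k then x ^ k else 0.

Lemma proj_terms_bounds x w k : 0 <= x -> 0 <= proj_terms x w k <= x ^ k.
Proof.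
  intro Hx. assert (0 <= x ^ k) by (apply pow_le; auto).
  unfold proj_terms; destruct (w k); lra.
Qed.

Lemma ex_series_geom_01 x : 0 <= x < 1 -> ex_series (fun k => x ^ k).
Proof. intro Hx. apply ex_series_geom. rewrite Rabs_pos_eq; lra. Qed.

Lemma ex_series_proj_terms x w : 0 <= x < 1 -> ex_series (proj_terms x w).
Proof.
  intro Hx. apply (@ex_series_le R_AbsRing R_CompleteNormedModule _ (fun k => x ^ k)).
  - intro n. change norm with Rabs.
    destruct (proj_terms_bounds x w n) as [H0 H1]; [lra|]. rewrite Rabs_pos_eq; lra.
  - apply ex_series_geom_01; auto.
Qed.

Lemma proj_head_shift x w : 0 <= x < 1 ->
  proj x w = (1 - x) * (if w 0%nat then 1 else 0) + x * proj x (shift w).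
Proof.
  intro Hx. unfold proj. fold (proj_terms x w). fold (proj_terms x (shift w)).
  rewrite Series_incr_1 by (apply ex_series_proj_terms; auto).
  rewrite (Series_ext _ (fun k => x * proj_terms x (shift w) k)).
  2: { intro n. unfold proj_terms, shift. destruct (w (S n)); simpl; ring. }
  rewrite Series_scal_l. unfold proj_terms at 1. destruct (w 0%nat); simpl; ring.
Qed.

Lemma proj_bounds x w : 0 <= x < 1 -> 0 <= proj x w <= 1.
Proof.
  intro Hx. unfold proj. fold (proj_terms x w).
  assert (Hle : Series (proj_terms x w) <= / (1 - x)).
  { rewrite <- Series_geom by (rewrite Rabs_pos_eq; lra).
    apply Series_le; [intro; apply proj_terms_bounds; lra|apply ex_series_geom_01; auto]. }
  assert (Hge : 0 <= Series (proj_terms x w)).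
  { replace 0 with (Series (fun k => 0 * x ^ k))
      by (rewrite Series_scal_l; ring).
    apply Series_le.
    - intro n. destruct (proj_terms_bounds x w n); [lra|]. split; lra.
    - apply ex_series_proj_terms; auto. }
  split; [apply Rmult_le_pos; lra|].
  apply (Rmult_le_compat_l (1 - x)) in Hle; [|lra]. rewrite Rinv_r in Hle by lra. lra.
Qed.

Lemma proj_ones x : 0 <= x < 1 -> proj x ones = 1.
Proof.
  intro Hx. unfold proj, ones.
  rewrite Series_geom by (rewrite Rabs_pos_eq; lra). field. lra.
Qed.

Lemma proj_flip x w : 0 <= x < 1 -> proj x (flip w) = 1 - proj x w.
Proof.
  intro Hx. unfold proj. fold (proj_terms x w).
  rewrite (Series_ext _ (fun k => x ^ k - proj_terms x w k)).
  2: { intro n; unfold proj_terms, flip; destruct (w n); simpl; ring. }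
  rewrite Series_minus by auto using ex_series_geom_01, ex_series_proj_terms.
  rewrite Series_geom by (rewrite Rabs_pos_eq; lra). field. lra.
Qed.

Lemma proj_at_0 w : proj 0 w = if w 0%nat then 1 else 0.
Proof. rewrite proj_head_shift by lra. destruct (w 0%nat); ring. Qed.

Lemma proj_shift x w : 0 < x < 1 ->
  proj x (shift w) = (proj x w - (1 - x) * (if w 0%nat then 1 else 0)) / x.
Proof. intro Hx. rewrite (proj_head_shift x w) by lra. field. lra. Qed.

Lemma proj_continuous w x : -1 < x < 1 -> continuity_pt (fun y => proj y w) x.
Proof.
  intro Hx. set (a := fun k => if w k then 1 else 0).
  apply (continuity_pt_ext (fun y => (1 - y) * PSeries a y)).
  { intro y. unfold proj, PSeries. f_equal. apply Series_ext. intro n; unfold a.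
    destruct (w n); ring. }
  assert (Hx1 : Rabs x < 1) by (apply Rabs_def1; lra).
  apply continuity_pt_mult.
  - apply continuity_pt_minus; [apply continuity_pt_const; intros ? ?; auto|].
    apply continuity_pt_id.
  - apply PSeries_continuity.
    destruct (CV_radius_bounded a) as [Hub _].
    set (r := (Rabs x + 1) / 2).
    assert (Hr : Rbar_le r (CV_radius a)).
    { apply Hub. exists 1. intro n. rewrite Rabs_mult, <- RPow_abs.
      assert (Rabs r ^ n <= 1).
      { rewrite <- (pow1 n). apply pow_incr. split; [apply Rabs_pos|].
        unfold r. pose proof (Rabs_pos x). rewrite Rabs_pos_eq; lra. }
      unfold a. destruct (w n); rewrite ?Rabs_R1, ?Rabs_R0; lra. }
    apply (Rbar_lt_le_trans _ r); [simpl; unfold r; lra|auto].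
Qed.

(** * Counting prefixes *)

Definition indicator (P : Prop) : R := if excluded_middle_informative P then 1 else 0.

Lemma indicator_true (P : Prop) : P -> indicator P = 1.
Proof. intro H; unfold indicator; destruct (excluded_middle_informative P); tauto. Qed.
Lemma indicator_false (P : Prop) : ~ P -> indicator P = 0.
Proof. intro H; unfold indicator; destruct (excluded_middle_informative P); tauto. Qed.
Lemma indicator_iff (P Q : Prop) : (P <-> Q) -> indicator P = indicator Q.
Proof.
  intro H; unfold indicator.
  destruct (excluded_middle_informative P), (excluded_middle_informative Q); tauto.
Qed.
Lemma indicator_bounds P : 0 <= indicator P <= 1.
Proof. unfold indicator; destruct (excluded_middle_informative P); lra. Qed.

Definition sum_words (n : nat) (f : list bool -> R) : R :=
  fold_right Rplus 0 (map f (all_words n)).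

Lemma fold_right_Rplus_app l1 l2 :
  fold_right Rplus 0 (l1 ++ l2) = fold_right Rplus 0 l1 + fold_right Rplus 0 l2.
Proof. induction l1; simpl; [ring|rewrite IHl1; ring]. Qed.

Lemma sum_words_0 f : sum_words 0 f = f [].
Proof. unfold sum_words; simpl; ring. Qed.

Lemma sum_words_S n f :
  sum_words (S n) f = sum_words n (fun u => f (false :: u)) + sum_words n (fun u => f (true :: u)).
Proof. unfold sum_words. simpl. rewrite map_app, fold_right_Rplus_app, !map_map. reflexivity. Qed.

Lemma sum_words_plus n f g : sum_words n (fun u => f u + g u) = sum_words n f + sum_words n g.
Proof.
  revert f g; induction n; intros f g; [rewrite !sum_words_0; ring|].
  rewrite !sum_words_S, !IHn. ring.
Qed.

Lemma sum_words_scal n c f : sum_words n (fun u => c * f u) = c * sum_words n f.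
Proof.
  revert f; induction n; intros f; [rewrite !sum_words_0; ring|].
  rewrite !sum_words_S, !IHn. ring.
Qed.

Lemma sum_words_le n f g : (forall u, f u <= g u) -> sum_words n f <= sum_words n g.
Proof.
  revert f g; induction n; intros f g H; [rewrite !sum_words_0; auto|].
  rewrite !sum_words_S. apply Rplus_le_compat; apply IHn; auto.
Qed.

Lemma sum_words_ext n f g : (forall u, f u = g u) -> sum_words n f = sum_words n g.
Proof. intro H. apply Rle_antisym; apply sum_words_le; intro u; rewrite H; lra. Qed.

Lemma sum_words_snoc n f :
  sum_words (S n) f = sum_words n (fun u => f (u ++ [false]) + f (u ++ [true])).
Proof.
  revert f; induction n; intro f.
  - rewrite sum_words_S, !sum_words_0. reflexivity.
  - rewrite (sum_words_S (S n) f), (IHn (fun u => f (false :: u))),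
      (IHn (fun u => f (true :: u))), (sum_words_S n). reflexivity.
Qed.

Lemma sum_words_app m k f :
  sum_words (m + k) f = sum_words m (fun u => sum_words k (fun v => f (u ++ v))).
Proof.
  revert f; induction m; intro f; [rewrite sum_words_0; reflexivity|].
  change (S m + k)%nat with (S (m + k)). rewrite (sum_words_S (m + k) f), !IHm, (sum_words_S m).
  reflexivity.
Qed.

Lemma sum_words_1 n : sum_words n (fun _ => 1) = 2 ^ n.
Proof.
  induction n; [rewrite sum_words_0; simpl; ring|]. rewrite sum_words_S, IHn; simpl; ring.
Qed.

Lemma sum_words_negb n f : sum_words n (fun u => f (map negb u)) = sum_words n f.
Proof.
  revert f; induction n; intro f; [rewrite !sum_words_0; reflexivity|].
  rewrite !sum_words_S. simpl.
  rewrite (IHn (fun u => f (true :: u))), (IHn (fun u => f (false :: u))). ring.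
Qed.

Fixpoint psum (f : nat -> R) (n : nat) : R :=
  match n with O => 0 | S n => psum f n + f n end.

Definition minus_count a b (n : nat) : R := sum_words n (fun u => indicator (minus_word a b u)).

Definition proj_gap a b (x : R) : R := proj x b - proj x a.

Definition state_weight (x : R) (s : state) : R :=
  match s with
  | Some (R, Some l) => proj x R - proj x l
  | Some (R, None) => proj x R
  | None => 0
  end.

Definition minus_weight a b (x : R) (n : nat) : R :=
  sum_words n (fun u => indicator (minus_word a b u) * state_weight x (run a b u)).

Section Counting.

Variables alpha beta : Omega.
Hypothesis Hadm : admissible alpha beta.

Let N := minus_count alpha beta.
Let D := proj_gap alpha beta.
Let I u := indicator (minus_word alpha beta u).
Let W x u := state_weight x (run alpha beta u).

Lemma state_weight_snoc x u : 0 < x < 1 ->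
  I (u ++ [false]) * W x (u ++ [false]) + I (u ++ [true]) * W x (u ++ [true]) =
  (I u * W x u - D x * (I (u ++ [false]) + I (u ++ [true]) - I u)) / x.
Proof.
  intro Hx. unfold I, W, D, proj_gap.
  destruct (classic (minus_word alpha beta u)) as [Hu|Hu].
  2: { rewrite !indicator_false; [field; lra|auto|..];
       intro G; apply Hu; eapply minus_word_snoc_prefix; eauto. }
  destruct (minus_word_live _ _ Hadm u Hu) as [R [L E]].
  destruct (minus_word_live_cases _ _ Hadm u R L Hu E) as [H10 [Ht Hf]].
  pose proof Hadm as (Ha0&_&Hb0&_).
  rewrite !run_snoc, E, (indicator_true (minus_word alpha beta u)) by auto.
  simpl step.
  destruct (R 0%nat) eqn:ER; destruct (lower_head L) eqn:EL; [..|tauto|].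
  - rewrite (indicator_false (minus_word alpha beta (u ++ [false]))) by (rewrite Hf; discriminate).
    rewrite (indicator_true (minus_word alpha beta (u ++ [true]))) by (rewrite Ht; auto).
    destruct L as [l|]; simpl in *; [|discriminate].
    rewrite !proj_shift, ER, EL by auto. field; lra.
  - rewrite (indicator_true (minus_word alpha beta (u ++ [false]))) by (rewrite Hf; auto).
    rewrite (indicator_true (minus_word alpha beta (u ++ [true]))) by (rewrite Ht; auto).
    destruct L as [l|]; simpl in *; rewrite !proj_shift, ?ER, ?EL, Ha0, Hb0 by auto;
      field; lra.
  - rewrite (indicator_true (minus_word alpha beta (u ++ [false]))) by (rewrite Hf; auto).
    rewrite (indicator_false (minus_word alpha beta (u ++ [true]))) by (rewrite Ht; discriminate).
    destruct L as [l|]; simpl in *; rewrite !proj_shift, ?ER, ?EL by auto; field; lra.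
Qed.

Lemma minus_count_0 : N 0%nat = 1.
Proof. unfold N, minus_count. rewrite sum_words_0. apply indicator_true, minus_word_nil; auto. Qed.

Lemma minus_count_le_S n : N n <= N (S n).
Proof.
  unfold N, minus_count. rewrite sum_words_snoc. apply sum_words_le. intro u.
  destruct (classic (minus_word alpha beta u)) as [Hu|Hu].
  - rewrite indicator_true by auto.
    pose proof (indicator_bounds (minus_word alpha beta (u ++ [false]))).
    pose proof (indicator_bounds (minus_word alpha beta (u ++ [true]))).
    destruct (minus_word_extendable _ _ Hadm u Hu) as [Hext|Hext];
      rewrite (indicator_true _ Hext); lra.
  - rewrite indicator_false by auto.
    pose proof (indicator_bounds (minus_word alpha beta (u ++ [false]))).
    pose proof (indicator_bounds (minus_word alpha beta (u ++ [true]))). lra.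
Qed.

Lemma minus_count_submult m k : N (m + k)%nat <= N m * N k.
Proof.
  unfold N, minus_count. rewrite sum_words_app, Rmult_comm, <- sum_words_scal.
  apply sum_words_le. intro u. rewrite Rmult_comm, <- sum_words_scal.
  apply sum_words_le. intro v.
  pose proof (indicator_bounds (minus_word alpha beta u)).
  pose proof (indicator_bounds (minus_word alpha beta v)).
  destruct (classic (minus_word alpha beta (u ++ v))) as [Huv|Huv].
  - destruct (minus_word_app _ _ u v Huv). rewrite !indicator_true; auto; lra.
  - rewrite indicator_false by auto. nra.
Qed.

Lemma minus_count_le_pow2 n : N n <= 2 ^ n.
Proof.
  unfold N, minus_count. rewrite <- sum_words_1. apply sum_words_le. intro; apply indicator_bounds.
Qed.

Lemma minus_weight_0 x : 0 < x < 1 -> minus_weight alpha beta x 0 = 1.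
Proof.
  intro Hx. unfold minus_weight. rewrite sum_words_0, indicator_true by (apply minus_word_nil; auto).
  simpl. rewrite proj_ones by lra. ring.
Qed.

Lemma minus_weight_S x n : 0 < x < 1 ->
  minus_weight alpha beta x (S n) = (minus_weight alpha beta x n - D x * (N (S n) - N n)) / x.
Proof.
  intro Hx. unfold minus_weight, N, minus_count. rewrite !sum_words_snoc.
  rewrite (sum_words_ext n _ (fun u => / x * (I u * W x u) +
     (- D x / x) * ((I (u ++ [false]) + I (u ++ [true])) + (-1) * I u))).
  2: { intro u. pose proof (state_weight_snoc x u Hx) as Hs. unfold I, W in *.
       rewrite Hs. field. lra. }
  unfold I, W. rewrite sum_words_plus, !sum_words_scal, sum_words_plus, sum_words_scal.
  field. lra.
Qed.

Lemma minus_weight_identity x n : 0 < x < 1 ->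
  x ^ n * minus_weight alpha beta x n = 1 - D x * psum (fun m => (N (S m) - N m) * x ^ m) n.
Proof.
  intro Hx. induction n as [|n IH]; simpl.
  - rewrite minus_weight_0 by auto. ring.
  - rewrite minus_weight_S by auto.
    replace (1 - D x * (psum (fun m => (N (S m) - N m) * x ^ m) n + (N (S n) - N n) * x ^ n))
      with (x ^ n * minus_weight alpha beta x n - D x * ((N (S n) - N n) * x ^ n))
      by (rewrite IH; ring).
    field. lra.
Qed.

Lemma minus_weight_ge x n : 0 < x < 1 -> - N n <= minus_weight alpha beta x n.
Proof.
  intro Hx. unfold minus_weight, N, minus_count.
  replace (- _) with (-1 * sum_words n (fun u => indicator (minus_word alpha beta u))) by ring.
  rewrite <- sum_words_scal.
  apply sum_words_le. intro u.
  destruct (classic (minus_word alpha beta u)) as [Hu|Hu]; [|rewrite indicator_false by auto; lra].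
  rewrite indicator_true by auto. destruct (minus_word_live _ _ Hadm u Hu) as [R [L ->]].
  pose proof (proj_bounds x R ltac:(lra)).
  destruct L as [l|]; simpl; [pose proof (proj_bounds x l ltac:(lra))|]; lra.
Qed.

Lemma gap_increments_le x n : 0 < x < 1 ->
  D x * psum (fun m => (N (S m) - N m) * x ^ m) n <= 1 + x ^ n * N n.
Proof.
  intro Hx. pose proof (minus_weight_identity x n Hx). pose proof (minus_weight_ge x n Hx).
  assert (0 <= x ^ n) by (apply pow_le; lra). nra.
Qed.

End Counting.

(** * The critical radius of a submultiplicative sequence *)

Lemma pow_ge_bernoulli h n : -1 <= h -> 1 + INR n * h <= (1 + h) ^ n.
Proof.
  intro Hh. induction n; [simpl; lra|].
  rewrite S_INR. simpl. assert (0 <= INR n) by apply pos_INR.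
  assert (0 <= INR n * h * h) by (rewrite Rmult_assoc; apply Rmult_le_pos; [lra|nra]). nra.
Qed.

Lemma psum_nonneg f n : (forall m, 0 <= f m) -> 0 <= psum f n.
Proof. intro Hf. induction n; simpl; [lra|]. specialize (Hf n); lra. Qed.

Lemma psum_le_mono f K n : (forall m, 0 <= f m) -> (K <= n)%nat -> psum f K <= psum f n.
Proof. intros Hf Hk. induction Hk; [lra|]. simpl. specialize (Hf m). lra. Qed.

Lemma psum_ge_const f K c : (forall m, (m < K)%nat -> c <= f m) -> INR K * c <= psum f K.
Proof.
  induction K; intro H; [simpl; lra|].
  rewrite S_INR. simpl. assert (c <= f K) by (apply H; lia).
  assert (INR K * c <= psum f K) by (apply IHK; intros; apply H; lia). lra.
Qed.

Lemma abel_summation (N : nat -> R) x K :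
  x * psum (fun m => (N (S m) - N m) * x ^ m) K =
  (1 - x) * psum (fun m => N m * x ^ m) K + N K * x ^ K - N 0%nat.
Proof. induction K; simpl; [ring|]. rewrite Rmult_plus_distr_l, IHK. ring. Qed.

Lemma power_sum_ge (N : nat -> R) x z K : 0 < z -> 0 <= x <= z ->
  (forall m, 1 <= z ^ m * N m) -> INR K * (1 - x / z) <= 1 / 2 ->
  INR K / 2 <= psum (fun m => N m * x ^ m) K.
Proof.
  intros Hz Hx HN HK. replace (INR K / 2) with (INR K * (1 / 2)) by field.
  apply psum_ge_const. intros m Hm.
  assert (Hq : 0 <= x / z <= 1).
  { split; [apply Rdiv_le_0_compat; lra|].
    apply (Rmult_le_reg_r z); [lra|]. unfold Rdiv. rewrite Rmult_assoc, Rinv_l; lra. }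
  assert (HNx : N m * x ^ m = (z ^ m * N m) * (x / z) ^ m).
  { unfold Rdiv. rewrite Rpow_mult_distr, pow_inv. field. apply pow_nonzero. lra. }
  rewrite HNx.
  pose proof (pow_ge_bernoulli (x / z - 1) m ltac:(lra)) as Hb.
  replace (1 + (x / z - 1)) with (x / z) in Hb by ring.
  assert (INR m <= INR K) by (apply le_INR; lia).
  assert (0 <= INR m) by apply pos_INR.
  assert (0 <= (x / z) ^ m) by (apply pow_le; lra).
  specialize (HN m). nra.
Qed.

Lemma continuity_pt_pos_nbhd D r : continuity_pt D r -> 0 < D r ->
  exists eta, 0 < eta /\ forall x, Rabs (x - r) < eta -> D r / 2 < D x.
Proof.
  intros Hc Hp. unfold continuity_pt, continue_in, limit1_in, limit_in in Hc.
  destruct (Hc (D r / 2)) as [eta [He H]]; [lra|].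
  exists eta; split; auto. intros x Hx.
  destruct (Req_dec x r) as [->|Hne]; [lra|].
  assert (G : dist R_met (D x) (D r) < D r / 2).
  { apply H. repeat split; auto. }
  simpl in G. unfold R_dist in G. apply Rabs_def2 in G. lra.
Qed.

Definition exp_growth (N : nat -> R) : Prop :=
  exists c r, 0 < c /\ 1 < r /\ forall K, exists n, (K <= n)%nat /\ c * r ^ n <= N n.

Section CriticalRadius.

Variable N : nat -> R.
Hypothesis N_0 : N 0%nat = 1.
Hypothesis N_le_S : forall n, N n <= N (S n).
Hypothesis N_submult : forall m k, N (m + k)%nat <= N m * N k.
Hypothesis N_le_pow2 : forall n, N n <= 2 ^ n.

Lemma N_ge_1 n : 1 <= N n.
Proof. induction n; [lra|]. specialize (N_le_S n); lra. Qed.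

Lemma pow_N_submult x m k : 0 <= x ->
  x ^ (m + k) * N (m + k)%nat <= (x ^ m * N m) * (x ^ k * N k).
Proof.
  intro Hx. rewrite pow_add.
  assert (0 <= x ^ m * x ^ k) by (apply Rmult_le_pos; apply pow_le; auto).
  pose proof (N_submult m k). nra.
Qed.

Lemma pow_N_mult_le_1 x k q : 0 <= x -> x ^ k * N k <= 1 ->
  x ^ (q * k) * N (q * k)%nat <= 1.
Proof.
  intros Hx Hk. induction q as [|q IH]; [simpl; rewrite N_0; lra|].
  change (S q * k)%nat with (k + q * k)%nat.
  pose proof (pow_N_submult x k (q * k) Hx).
  assert (0 <= x ^ (q * k) * N (q * k)%nat).
  { pose proof (N_ge_1 (q * k)). assert (0 <= x ^ (q * k)) by (apply pow_le; auto). nra. }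
  nra.
Qed.

Lemma pow_N_le_1_le_1 x k : (1 <= k)%nat -> 0 <= x -> x ^ k * N k <= 1 -> x <= 1.
Proof.
  intros Hk Hx H. destruct (Rle_or_lt x 1) as [|Hx1]; auto. exfalso.
  assert (1 < x ^ k) by (apply Rlt_pow_R1; [lra|lia]).
  pose proof (N_ge_1 k). nra.
Qed.

Lemma pow_N_bounded x k : (1 <= k)%nat -> 0 <= x -> x ^ k * N k <= 1 ->
  forall n, x ^ n * N n <= 2 ^ k.
Proof.
  intros Hk Hx H n. pose proof (pow_N_le_1_le_1 x k Hk Hx H) as Hx1.
  rewrite (Nat.div_mod_eq n k), Nat.mul_comm.
  set (q := (n / k)%nat). set (s := (n mod k)%nat).
  assert (Hs : (s < k)%nat) by (apply Nat.mod_upper_bound; lia).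
  assert (Hqk := pow_N_mult_le_1 x k q Hx H).
  assert (Hsk : x ^ s * N s <= 2 ^ k).
  { assert (0 <= x ^ s <= 1) by (split; [apply pow_le|rewrite <- (pow1 s); apply pow_incr]; lra).
    assert (2 ^ s <= 2 ^ k) by (apply Rle_pow; [lra|lia]).
    pose proof (N_le_pow2 s). pose proof (N_ge_1 s). nra. }
  pose proof (pow_N_submult x (q * k) s Hx).
  assert (0 <= x ^ (q * k) * N (q * k)%nat).
  { pose proof (N_ge_1 (q * k)). assert (0 <= x ^ (q * k)) by (apply pow_le; auto). nra. }
  assert (0 <= x ^ s * N s).
  { pose proof (N_ge_1 s). assert (0 <= x ^ s) by (apply pow_le; auto). nra. }
  nra.
Qed.

Definition subcritical (x : R) : Prop :=
  0 <= x /\ exists k, (1 <= k)%nat /\ x ^ k * N k < 1.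

Lemma subcritical_quarter : subcritical (1 / 4).
Proof.
  split; [lra|]. exists 1%nat. split; auto. pose proof (N_le_pow2 1). simpl in *. lra.
Qed.

Lemma subcritical_le_1 x : subcritical x -> x <= 1.
Proof. intros [Hx [k [Hk H]]]. apply (pow_N_le_1_le_1 x k); auto; lra. Qed.

Lemma subcritical_le_inv c r : 0 < c -> 1 < r ->
  (forall K, exists n, (K <= n)%nat /\ c * r ^ n <= N n) ->
  forall x, subcritical x -> x <= / r.
Proof.
  intros Hc Hr Hgrow x [Hx [k [Hk Hxk]]].
  destruct (Rle_or_lt x (/ r)) as [|Hxr]; auto. exfalso.
  assert (0 < / r) by (apply Rinv_0_lt_compat; lra).
  assert (Hxr1 : 1 < x * r).
  { apply (Rmult_lt_compat_r r) in Hxr; [|lra]. rewrite Rinv_l in Hxr; lra. }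
  destruct (INR_unbounded (2 ^ k / (c * (x * r - 1)))) as [K HK].
  destruct (Hgrow K) as [n [Hn Hcn]].
  pose proof (pow_N_bounded x k Hk Hx ltac:(lra) n) as Hb.
  pose proof (pow_ge_bernoulli (x * r - 1) n ltac:(lra)) as Hbe.
  replace (1 + (x * r - 1)) with (x * r) in Hbe by ring. rewrite Rpow_mult_distr in Hbe.
  assert (INR K <= INR n) by (apply le_INR; auto).
  assert (0 < x ^ n) by (apply pow_lt; lra).
  assert (Hgr : c * (x ^ n * r ^ n) <= x ^ n * N n).
  { replace (c * (x ^ n * r ^ n)) with (x ^ n * (c * r ^ n)) by ring.
    apply Rmult_le_compat_l; lra. }
  assert (HK' : 2 ^ k < INR K * (c * (x * r - 1))).
  { apply (Rmult_lt_compat_r (c * (x * r - 1))) in HK; [|nra].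
    unfold Rdiv in HK. rewrite Rmult_assoc, Rinv_l in HK; nra. }
  assert (INR K * (c * (x * r - 1)) <= INR n * (c * (x * r - 1)))
    by (apply Rmult_le_compat_r; nra).
  assert (c * (1 + INR n * (x * r - 1)) <= c * (x ^ n * r ^ n))
    by (apply Rmult_le_compat_l; lra).
  nra.
Qed.

(* By submultiplicativity, [rho] is [1 / lim N_n^(1/n)]. *)
Variable rho : R.
Hypothesis rho_lub : is_lub subcritical rho.

Lemma critical_ge_quarter : 1 / 4 <= rho.
Proof. apply rho_lub, subcritical_quarter. Qed.

Lemma critical_lt_1 : exp_growth N -> rho < 1.
Proof.
  intros (c & r & Hc & Hr & Hgrow).
  assert (rho <= / r).
  { apply (proj2 rho_lub). exact (subcritical_le_inv c r Hc Hr Hgrow). }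
  assert (/ r < 1) by (rewrite <- Rinv_1; apply Rinv_lt_contravar; lra). lra.
Qed.

Lemma below_critical x : 0 < x < rho ->
  forall K, exists n, (K <= n)%nat /\ x ^ n * N n <= 1.
Proof.
  intros Hx K.
  assert (Hy : exists y, subcritical y /\ x < y).
  { apply NNPP; intro H. assert (rho <= x); [|lra].
    apply rho_lub. intros y Ey. destruct (Rle_or_lt y x); auto. exfalso; eauto. }
  destruct Hy as [y [[Hy0 [k [Hk Hyk]]] Hxy]].
  assert (Hxk : x ^ k * N k <= 1).
  { assert (x ^ k <= y ^ k) by (apply pow_incr; lra). pose proof (N_ge_1 k). nra. }
  exists (K * k)%nat. split; [nia|]. apply pow_N_mult_le_1; auto; lra.
Qed.

Lemma above_critical z : rho < z -> forall k, 1 <= z ^ k * N k.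
Proof.
  intros Hz [|k]; [simpl; rewrite N_0; lra|].
  destruct (Rle_or_lt 1 (z ^ S k * N (S k))) as [|H]; auto. exfalso.
  assert (z <= rho); [|lra].
  apply rho_lub. split; [pose proof critical_ge_quarter; lra|]. exists (S k). split; [lia|auto].
Qed.

Lemma increments_bounded (D : R -> R) x c0 : 0 < c0 -> 0 < x < rho -> c0 < D x ->
  (forall n, D x * psum (fun m => (N (S m) - N m) * x ^ m) n <= 1 + x ^ n * N n) ->
  forall K, psum (fun m => (N (S m) - N m) * x ^ m) K <= 2 / c0.
Proof.
  intros Hc0 Hx HDx Hid K.
  set (T := psum (fun m => (N (S m) - N m) * x ^ m)).
  assert (Tnn : forall m, 0 <= (N (S m) - N m) * x ^ m).
  { intro m. apply Rmult_le_pos; [pose proof (N_le_S m); lra|apply pow_le; lra]. }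
  destruct (below_critical x Hx K) as [n [Hn Hxn]].
  assert (T K <= T n) by (apply psum_le_mono; auto).
  assert (0 <= T K) by (apply psum_nonneg; auto).
  specialize (Hid n). fold T in Hid.
  apply (Rmult_le_reg_l c0); [lra|]. replace (c0 * (2 / c0)) with 2 by (field; lra). nra.
Qed.

Lemma positive_gap_absurd (D : R -> R) : rho < 1 -> continuity_pt D rho -> 0 < D rho ->
  (forall x n, 0 < x < 1 ->
     D x * psum (fun m => (N (S m) - N m) * x ^ m) n <= 1 + x ^ n * N n) ->
  False.
Proof.
  intros Hrho1 HDc HDpos Hid. pose proof critical_ge_quarter.
  destruct (continuity_pt_pos_nbhd D rho HDc HDpos) as [eta [Heta Hnear]].
  set (c0 := D rho / 2). assert (Hc0 : 0 < c0) by (unfold c0; lra).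
  set (B := (1 + 2 / c0) / (1 - rho)).
  destruct (INR_unbounded (2 * B)) as [K HK].
  assert (HB : (1 - rho) * B = 1 + 2 / c0) by (unfold B; field; lra).
  assert (0 < B) by (unfold B; apply Rdiv_lt_0_compat;
                     [assert (0 < 2 / c0) by (apply Rdiv_lt_0_compat; lra)|]; lra).
  assert (HKp : 0 < INR K) by lra.
  set (t := Rmin (eta / 2) (rho / (4 * INR K))).
  assert (Ht0 : 0 < t) by (apply Rmin_glb_lt; [lra|apply Rdiv_lt_0_compat; lra]).
  assert (Ht1 : t <= eta / 2) by apply Rmin_l.
  assert (Ht2 : t * (4 * INR K) <= rho).
  { replace rho with (rho / (4 * INR K) * (4 * INR K)) by (field; lra).
    apply Rmult_le_compat_r; [lra|apply Rmin_r]. }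
  set (x := rho - t). set (z := rho + t).
  assert (HK1 : 1 <= INR K).
  { destruct K; [simpl in HKp; lra|]. rewrite S_INR. pose proof (pos_INR K). lra. }
  assert (t * 4 <= t * (4 * INR K)) by (apply Rmult_le_compat_l; lra).
  assert (Hx : 0 < x < rho) by (unfold x; lra).
  assert (HDx : c0 < D x) by (apply Hnear; unfold x; rewrite Rabs_left; lra).
  assert (HT := increments_bounded D x c0 Hc0 Hx HDx (fun n => Hid x n ltac:(lra)) K).
  assert (HP : INR K / 2 <= psum (fun m => N m * x ^ m) K).
  { apply (power_sum_ge N x z K); unfold x, z in *; try lra.
    - intro m. apply above_critical. lra.
    - replace (1 - (rho - t) / (rho + t)) with (2 * t / (rho + t)) by (field; lra).
      apply (Rmult_le_reg_r (rho + t)); [lra|].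
      unfold Rdiv. rewrite !Rmult_assoc, Rinv_l by lra. nra. }
  pose proof (abel_summation N x K) as Hab. rewrite N_0 in Hab.
  assert (0 <= N K * x ^ K) by (pose proof (N_ge_1 K); pose proof (pow_le x K); nra).
  assert (0 <= psum (fun m => (N (S m) - N m) * x ^ m) K).
  { apply psum_nonneg. intro m.
    apply Rmult_le_pos; [pose proof (N_le_S m); lra|apply pow_le; lra]. }
  assert ((1 - rho) * (INR K / 2) <= (1 - x) * psum (fun m => N m * x ^ m) K)
    by (apply Rmult_le_compat; [lra|lra|unfold x; lra|exact HP]).
  assert ((1 - rho) * B < (1 - rho) * (INR K / 2)) by (apply Rmult_lt_compat_l; lra).
  nra.
Qed.

End CriticalRadius.

(** * Roots of the gap *)

Lemma proj_gap_continuous a b x : -1 < x < 1 -> continuity_pt (proj_gap a b) x.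
Proof. intro Hx. apply continuity_pt_minus; apply proj_continuous; auto. Qed.

Lemma proj_gap_at_0 a b : admissible a b -> proj_gap a b 0 = 1.
Proof.
  intros (Ha0&_&Hb0&_). unfold proj_gap. rewrite !proj_at_0, Ha0, Hb0. ring.
Qed.

Lemma proj_gap_pos a b : admissible a b ->
  (forall x, 0 < x < 1 -> proj_gap a b x <> 0) -> forall x, 0 < x < 1 -> 0 < proj_gap a b x.
Proof.
  intros Hadm Hnz x Hx. apply Rnot_le_lt. intros [Hlt|Heq]; [|exact (Hnz x Hx Heq)].
  destruct (Ranalysis5.IVT_interv (fun t => - proj_gap a b t) 0 x) as [z [Hz Ez]].
  - intros t Ht. apply continuity_pt_opp, proj_gap_continuous. lra.
  - lra.
  - rewrite proj_gap_at_0 by auto. lra.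
  - cbv beta. lra.
  - assert (z <> 0) by (intros ->; rewrite proj_gap_at_0 in Ez by auto; lra).
    apply (Hnz z); lra.
Qed.

Lemma proj_gap_root a b : admissible a b -> exp_growth (minus_count a b) ->
  exists x, 0 < x < 1 /\ proj x a = proj x b.
Proof.
  intros Hadm Hgrow. apply NNPP; intro Hno.
  assert (Hpos : forall x, 0 < x < 1 -> 0 < proj_gap a b x).
  { apply proj_gap_pos; auto. intros x Hx E. apply Hno. exists x. unfold proj_gap in E. lra. }
  pose proof (minus_count_0 a b Hadm) as N0.
  pose proof (minus_count_le_S a b Hadm) as NS.
  pose proof (minus_count_submult a b) as Nsub.
  pose proof (minus_count_le_pow2 a b) as N2.
  assert (Hbound : bound (subcritical (minus_count a b))).
  { exists 1. intros x Hx. eapply subcritical_le_1; eauto. }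
  destruct (completeness _ Hbound (ex_intro _ _ (subcritical_quarter _ N2))) as [rho Hrho].
  pose proof (critical_ge_quarter _ N2 rho Hrho).
  pose proof (critical_lt_1 _ N0 NS Nsub N2 rho Hrho Hgrow).
  apply (positive_gap_absurd _ N0 NS Nsub N2 rho Hrho (proj_gap a b)); auto.
  - apply proj_gap_continuous. lra.
  - apply Hpos. lra.
  - intros x n Hx. apply gap_increments_le; auto.
Qed.

(** * Complementing bits, and entropy *)

Lemma in_co_flip a b w : in_co a b w <-> in_oc (flip b) (flip a) (flip w).
Proof. unfold in_co, in_oc. rewrite lex_lt_flip, lex_le_flip. tauto. Qed.

Lemma in_oc_flip a b w : in_oc a b w <-> in_co (flip b) (flip a) (flip w).
Proof. unfold in_co, in_oc. rewrite lex_lt_flip, lex_le_flip. tauto. Qed.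

Lemma admissible_flip a b : admissible a b -> admissible (flip b) (flip a).
Proof.
  intros (Ha0&Ha1&Hb0&Hb1&HA&HB). unfold flip.
  repeat split; try (rewrite ?Ha0, ?Ha1, ?Hb0, ?Hb1; reflexivity).
  - intros n H. apply (HB n), in_co_flip. exact H.
  - intros n H. apply (HA n), in_oc_flip. exact H.
Qed.

Lemma Omega_plus_flip a b w : Omega_plus a b w <-> Omega_minus (flip b) (flip a) (flip w).
Proof.
  unfold Omega_plus, Omega_minus. split; intros H n G; apply (H n), in_co_flip; auto.
Qed.

Definition plus_word a b (u : list bool) :=
  exists w, Omega_plus a b w /\ initial w (length u) = u.

Lemma plus_word_flip a b u : plus_word a b u <-> minus_word (flip b) (flip a) (map negb u).
Proof.
  assert (Hinit : forall w n, initial (flip w) n = map negb (initial w n)).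
  { intros w n. unfold initial, flip. rewrite map_map. reflexivity. }
  unfold minus_word. rewrite length_map. split.
  - intros [w [H1 H2]]. exists (flip w). rewrite Hinit, H2, <- Omega_plus_flip. auto.
  - intros [w [H1 H2]]. exists (flip w).
    rewrite Omega_plus_flip, flip_flip, Hinit, H2, map_map.
    split; auto. rewrite <- map_id. apply map_ext. intro c; destruct c; reflexivity.
Qed.

Lemma plus_count_flip a b n :
  sum_words n (fun u => indicator (plus_word a b u)) = minus_count (flip b) (flip a) n.
Proof.
  unfold minus_count. rewrite <- (sum_words_negb n (fun u => indicator (minus_word _ _ u))).
  apply sum_words_ext. intro u. apply indicator_iff, plus_word_flip.
Qed.

Lemma length_filter_INR {A} (f : A -> bool) l :
  INR (length (filter f l)) = fold_right Rplus 0 (map (fun x => if f x then 1 else 0) l).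
Proof.
  induction l as [|x l IH]; [reflexivity|]. simpl.
  destruct (f x); [simpl length; rewrite S_INR, IH; ring|rewrite IH; ring].
Qed.

Lemma card_prefixes_le a b n : INR (card_prefixes (Omega_ab a b) n) <=
  minus_count a b (S n) + minus_count (flip b) (flip a) (S n).
Proof.
  rewrite <- plus_count_flip. unfold card_prefixes, minus_count.
  rewrite length_filter_INR, <- sum_words_plus. apply sum_words_le. intro l.
  pose proof (indicator_bounds (minus_word a b l)).
  pose proof (indicator_bounds (plus_word a b l)).
  destruct (excluded_middle_informative (exists w, Omega_ab a b w /\ prefix w n = l))
    as [[w [Hw E]]|]; [|lra].
  assert (Hl : initial w (length l) = l).
  { rewrite <- E. unfold prefix. rewrite length_map, length_seq. reflexivity. }
  destruct Hw as [Hw|Hw].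
  - rewrite (indicator_true (minus_word a b l)) by (exists w; auto). lra.
  - rewrite (indicator_true (plus_word a b l)) by (exists w; auto). lra.
Qed.

Lemma non_null_growth a b : non_null a b ->
  exists d, 0 < d /\ forall K, exists n, (K <= n)%nat /\
    exp (INR n * d) <= INR (card_prefixes (Omega_ab a b) n).
Proof.
  unfold non_null, entropy.
  set (u := fun n => ln (INR (card_prefixes (Omega_ab a b) n)) / INR n). intro H.
  assert (Hd : exists d, 0 < d /\ forall K, exists n, (K <= n)%nat /\ d < u n).
  { destruct (ex_LimSup_seq u) as [l Hl]. rewrite (is_LimSup_seq_unique u l Hl) in H.
    destruct l as [l| |]; simpl in H, Hl; [|exists 1; split; [lra|apply Hl]|contradiction].
    exists (l / 2). split; [lra|]. intro K. assert (Hp : 0 < l / 2) by lra.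
    destruct (proj1 (Hl (mkposreal _ Hp)) K) as [n [Hn G]]. simpl in G.
    exists n; split; auto. lra. }
  destruct Hd as [d [Hd HK]]. exists d. split; auto. intro K.
  destruct (HK (S K)) as [n [Hn G]]. exists n. split; [lia|].
  unfold u in G. set (m := INR (card_prefixes (Omega_ab a b) n)) in G |- *.
  assert (Hn0 : 0 < INR n) by (apply lt_0_INR; lia).
  assert (G' : INR n * d < ln m).
  { apply (Rmult_lt_compat_l (INR n)) in G; auto. unfold Rdiv in G.
    replace (INR n * (ln m * / INR n)) with (ln m) in G by (field; lra). lra. }
  assert (Hm : 0 < m).
  { destruct (Rlt_or_le 0 m) as [|Hm]; auto. exfalso.
    unfold ln in G'. destruct (Rlt_dec 0 m); [lra|]. nra. }
  rewrite <- (exp_ln m Hm). left. apply exp_increasing. auto.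
Qed.

Lemma exp_INR_mult d n : exp (INR n * d) = exp d ^ n.
Proof.
  induction n; [simpl; rewrite Rmult_0_l, exp_0; auto|].
  rewrite S_INR, Rmult_plus_distr_r, Rmult_1_l, exp_plus, IHn. simpl. ring.
Qed.

Lemma exp_growth_of_sum (N1 N2 : nat -> R) d : 0 < d ->
  (forall K, exists n, (K <= n)%nat /\ exp (INR n * d) <= N1 (S n) + N2 (S n)) ->
  exp_growth N1 \/ exp_growth N2.
Proof.
  intros Hd Hsum. assert (Hr : 1 < exp d) by (rewrite <- exp_0; apply exp_increasing; auto).
  assert (Hgrowth : forall N : nat -> R,
    (forall K, exists n, (K <= n)%nat /\ exp (INR n * d) / 2 <= N (S n)) -> exp_growth N).
  { intros N H. exists (/ (2 * exp d)), (exp d).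
    split; [apply Rinv_0_lt_compat; lra|split; auto].
    intro K. destruct (H K) as [n [Hn G]]. exists (S n). split; [lia|].
    rewrite exp_INR_mult in G. simpl pow.
    replace (/ (2 * exp d) * (exp d * exp d ^ n)) with (exp d ^ n / 2) by (field; lra). auto. }
  destruct (classic (forall K, exists n, (K <= n)%nat /\ exp (INR n * d) / 2 <= N1 (S n)))
    as [H|H]; [left; auto|right].
  apply not_all_ex_not in H. destruct H as [K0 H0]. apply Hgrowth. intro K.
  destruct (Hsum (max K K0)) as [n [Hn G]]. exists n. split; [lia|].
  assert (N1 (S n) < exp (INR n * d) / 2); [|lra].
  apply Rnot_le_lt. intro G'. apply H0. exists n. split; [lia|auto].
Qed.

Theorem theorem3 (alpha beta : Omega) :
  admissible alpha beta -> non_null alpha beta ->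
  exists x : R, 0 < x < 1 /\ proj x alpha = proj x beta.
Proof.
  intros Hadm Hnn. destruct (non_null_growth alpha beta Hnn) as [d [Hd Hcard]].
  destruct (exp_growth_of_sum (minus_count alpha beta) (minus_count (flip beta) (flip alpha)) d)
    as [G|G]; auto.
  - intro K. destruct (Hcard K) as [n [Hn Hc]]. exists n. split; auto.
    eapply Rle_trans; [exact Hc|apply card_prefixes_le].
  - apply proj_gap_root; auto.
  - destruct (proj_gap_root _ _ (admissible_flip _ _ Hadm) G) as [x [Hx E]].
    exists x. split; auto. rewrite !proj_flip in E by lra. lra.
Qed.
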